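(* Let $\partial$ and $\partial'$ be $(A,B)$-equivalent $M_{A,B}$-differentials. Then the set of all $\partial$-trivial elements coincides with the set of all $\partial'$-trivial elements.
   Context: $\mathbb E$ is a field. $A=\{a_1\prec\dots\prec a_N\}$ is a finite linearly ordered set with a grading $\deg:A\to\mathbb Z$; $\mathbb E(A)$ is the graded vector space with basis $A$. An $M$-differential is a linear map $\partial:\mathbb E(A)\to\mathbb E(A)$ of degree $-1$ with $\partial^2=0$ and $\partial(a_i)\in\mathrm{span}\{a_1,\dots,a_{i-1}\}$ for all $i$. For $B\subset A$ with $\partial(\mathbb E(B))\subset\mathbb E(B)$, $\partial$ is called an $M_{A,B}$-differential. $\mathrm{Aut}_T(A,B)$ is the group of graded linear automorphisms $g$ of $\mathbb E(A)$ preserving each subspace $\mathrm{span}\{a_1,\dots,a_i\}$ and with $g(\mathbb E(B))=\mathbb E(B)$. Two $M_{A,B}$-differentials are $(A,B)$-equivalent if $\partial_2=g\partial_1g^{-1}$ for some $g\in\mathrm{Aut}_T(A,B)$. An element $a_k\in B$ is $\partial$-trivial if $k<N$, $a_{k+1}\in A\setminus B$, and $a_k$ appears with nonzero coefficient in the expansion of $\partial(a_{k+1})$ in the basis $A$. *)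

From HB Require Import structures.
From mathcomp Require Import all_boot all_order all_algebra.
Set Implicit Arguments. Unset Strict Implicit. Unset Printing Implicit Defensive.
Import GRing.Theory.
Local Open Scope ring_scope.

(* Conventions: the ordered basis A = {a_1 < ... < a_N} is indexed by 'I_N
   (a_{i+1} <-> ordinal i, order = order of indices); deg : 'I_N -> int is the
   grading; B is a subset {set 'I_N}.  A linear map f of E(A) is represented by
   its matrix M : 'M[E]_N in the basis A, with the COLUMN convention:
   M i j = coefficient of a_i in f(a_j), i.e. f(a_j) = \sum_i M i j a_i. *)

Definition has_degree (E : fieldType) (N : nat) (deg : 'I_N -> int) (d : int)
  (M : 'M[E]_N) : Prop :=
  forall i j : 'I_N, M i j != 0 -> deg i = deg j + d.

Definition M_differential (E : fieldType) (N : nat) (deg : 'I_N -> int)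
  (D : 'M[E]_N) : Prop :=
  [/\ has_degree deg (-1) D,
      D *m D = 0 &
      forall i j : 'I_N, D i j != 0 -> (i < j)%N].

Definition preserves (E : fieldType) (N : nat) (B : {set 'I_N}) (M : 'M[E]_N) : Prop :=
  forall i j : 'I_N, j \in B -> M i j != 0 -> i \in B.

Definition MAB_differential (E : fieldType) (N : nat) (deg : 'I_N -> int)
  (B : {set 'I_N}) (D : 'M[E]_N) : Prop :=
  M_differential deg D /\ preserves B D.

(* Aut_T(A,B): graded (degree 0) linear automorphisms preserving every
   span{a_1..a_i} (upper triangular in column convention) with g(E(B)) = E(B)
   (i.e. g(E(B)) <= E(B) and g^{-1}(E(B)) <= E(B)). *)
Definition AutT (E : fieldType) (N : nat) (deg : 'I_N -> int)
  (B : {set 'I_N}) (g : 'M[E]_N) : Prop :=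
  [/\ g \in unitmx,
      has_degree deg 0 g,
      (forall i j : 'I_N, g i j != 0 -> (i <= j)%N),
      preserves B g &
      preserves B (invmx g)].

Definition AB_equivalent (E : fieldType) (N : nat) (deg : 'I_N -> int)
  (B : {set 'I_N}) (D1 D2 : 'M[E]_N) : Prop :=
  exists g : 'M[E]_N, AutT deg B g /\ D2 = g *m D1 *m invmx g.

Definition D_trivial (E : fieldType) (N : nat) (B : {set 'I_N})
  (D : 'M[E]_N) (k : 'I_N) : Prop :=
  exists h : (k.+1 < N)%N,
    [/\ k \in B, Ordinal h \notin B & D k (Ordinal h) != 0].

From mathcomp Require Import all_boot all_order all_algebra.
Import GRing.Theory.
Local Open Scope ring_scope.

(* Conjugation by an invertible upper triangular g only rescales the
   superdiagonal of a strictly upper triangular matrix: comparing the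
   (k, k+1) entries of D2 g = g D1 gives
   D2_(k,k+1) g_(k+1,k+1) = g_(k,k) D1_(k,k+1), and the diagonal entries of g
   are nonzero.  Whether a_k is D-trivial depends only on B and on D_(k,k+1). *)

Section TriangularMatrices.

Context {E : fieldType} {N : nat}.

Definition upper_triangular (M : 'M[E]_N) : Prop :=
  forall i j : 'I_N, M i j != 0 -> (i <= j)%N.

Definition strictly_upper_triangular (M : 'M[E]_N) : Prop :=
  forall i j : 'I_N, M i j != 0 -> (i < j)%N.

Lemma unitmx_upper_diag_neq0 {g : 'M[E]_N} :
  g \in unitmx -> upper_triangular g -> forall i, g i i != 0.
Proof.
move=> g_unit g_upper i; apply: contraTneq g_unit => gii0.
rewrite unitmxE -det_tr det_trig.
  by rewrite (bigD1 i) //= mxE gii0 mul0r unitr0.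
apply/forallP => a; apply/forallP => b; apply/implyP => lt_ab; rewrite mxE.
by apply: contraTT lt_ab => /g_upper; rewrite -leqNgt.
Qed.

Section Superdiagonal.

Variables (A D : 'M[E]_N).
Hypotheses (A_upper : upper_triangular A) (D_strict : strictly_upper_triangular D).
Variables (i j : 'I_N).
Hypothesis ji : j = i.+1 :> nat.

Lemma mulmx_upper_strict_superdiag : (A *m D) i j = A i i * D i j.
Proof.
rewrite mxE (bigD1 i) //= big1 ?addr0 // => l neq_li.
have [->|/D_strict lt_lj] := eqVneq (D l j) 0; first by rewrite mulr0.
have [->|/A_upper le_il] := eqVneq (A i l) 0; first by rewrite mul0r.
by case/eqP: neq_li; apply/val_inj/eqP; rewrite eqn_leq le_il andbT -ltnS -ji.
Qed.

Lemma mulmx_strict_upper_superdiag : (D *m A) i j = D i j * A j j.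
Proof.
rewrite mxE (bigD1 j) //= big1 ?addr0 // => l neq_lj.
have [->|/D_strict lt_il] := eqVneq (D i l) 0; first by rewrite mul0r.
have [->|/A_upper le_lj] := eqVneq (A l j) 0; first by rewrite mulr0.
by case/eqP: neq_lj; apply/val_inj/eqP; rewrite eqn_leq le_lj /= ji.
Qed.

End Superdiagonal.

Lemma conj_strict_upper_superdiag_neq0 {g D1 D2 : 'M[E]_N} (i j : 'I_N) :
  g \in unitmx -> upper_triangular g ->
  strictly_upper_triangular D1 -> strictly_upper_triangular D2 ->
  D2 = g *m D1 *m invmx g -> j = i.+1 :> nat ->
  (D2 i j != 0) = (D1 i j != 0).
Proof.
move=> g_unit g_upper D1_strict D2_strict D2E ji.
have D2gE : D2 *m g = g *m D1 by rewrite D2E -mulmxA mulVmx ?mulmx1.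
have := congr1 (fun M : 'M[E]_N => M i j) D2gE.
rewrite mulmx_strict_upper_superdiag ?mulmx_upper_strict_superdiag // => eq_ij.
have gdiag := unitmx_upper_diag_neq0 g_unit g_upper.
by rewrite -(mulIr_eq0 _ (mulIf (gdiag j))) eq_ij mulf_eq0 (negbTE (gdiag i)).
Qed.

End TriangularMatrices.

Theorem lemma2p1 (E : fieldType) (N : nat) (deg : 'I_N -> int)
  (B : {set 'I_N}) (D1 D2 : 'M[E]_N) :
  MAB_differential deg B D1 -> MAB_differential deg B D2 ->
  AB_equivalent deg B D1 D2 ->
  forall k : 'I_N, D_trivial B D1 k <-> D_trivial B D2 k.
Proof.
move=> [[_ _ D1_strict] _] [[_ _ D2_strict] _] [g [[g_unit _ g_upper _ _] D2E]] k.
have superdiag h := conj_strict_upper_superdiag_neq0 k (Ordinal h) g_unit g_upper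
  D1_strict D2_strict D2E erefl.
by split=> -[h [kB hB nz]]; exists h; rewrite superdiag in nz *.
Qed.
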